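(* For all contexts $\Gamma,\Delta$, terms $M,A$ and substitution $\sigma$: if $\sigma:\Gamma\rightharpoonup\Delta$, $\Delta\ \mathrm{ok}$ and $\Gamma\vdash M:A$, then $\Delta\vdash M\bullet\sigma:A\bullet\sigma$.
   Context: Let $\mathcal V$ (the variables) be a type with decidable equality, equipped with functions $\mathrm{encode}:\mathcal V\to\mathbb N$ and $\mathrm{decode}:\mathbb N\to\mathcal V$ such that $\mathrm{encode}(\mathrm{decode}\,n)=n$ for all $n$. Let $\mathcal C$ (the constants) be any type. Terms $\Lambda$ are generated by: $c\,k$ ($k\in\mathcal C$), $v\,x$ ($x\in\mathcal V$), $\lambda[x:A]M$, $\Pi[x:A]B$ and $M\cdot N$; in $\lambda[x:A]M$ and $\Pi[x:A]B$ the name $x$ binds in $M$ (resp. $B$) but not in $A$. Terms are raw first-order syntax (not identified up to renaming of bound variables) and $\equiv$ denotes syntactic identity. The list of free variables is $\mathrm{fv}(c\,k)=[\,]$, $\mathrm{fv}(v\,x)=[x]$, $\mathrm{fv}(\lambda[x:A]M)=\mathrm{fv}\,A\mathbin{+\!\!+}(\mathrm{fv}\,M-x)$, $\mathrm{fv}(\Pi[x:A]B)=\mathrm{fv}\,A\mathbin{+\!\!+}(\mathrm{fv}\,B-x)$, $\mathrm{fv}(M\cdot N)=\mathrm{fv}\,M\mathbin{+\!\!+}\mathrm{fv}\,N$, where $\mathbin{+\!\!+}$ is list concatenation and $xs-x$ deletes every occurrence of $x$ from $xs$. Fix a function $\chi':\mathrm{List}\,\mathbb N\to\mathbb N$ with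 $\chi'(ns)\notin ns$ for every list $ns$, and put $X'(xs)=\mathrm{decode}(\chi'(\mathrm{map}\ \mathrm{encode}\ xs))$. A substitution is any function $\sigma:\mathcal V\to\Lambda$; $\iota=v$ is the identity substitution; $(\sigma,x:=N)(y)=N$ if $y=x$ and $\sigma\,y$ otherwise. For a substitution $\sigma$ and a list $xs$ of variables, $X(\sigma,xs)=X'(\text{concatenation of the lists }\mathrm{fv}(\sigma\,y)\text{ for }y\in xs)$. The action $M\bullet\sigma$ is defined by structural recursion: $c\,k\bullet\sigma=c\,k$; $v\,x\bullet\sigma=\sigma\,x$; $(M\cdot N)\bullet\sigma=(M\bullet\sigma)\cdot(N\bullet\sigma)$; $(\lambda[x:A]M)\bullet\sigma=\lambda[y:A\bullet\sigma](M\bullet(\sigma,x:=v\,y))$ with $y=X(\sigma,\mathrm{fv}\,M-x)$; $(\Pi[x:A]B)\bullet\sigma=\Pi[y:A\bullet\sigma](B\bullet(\sigma,x:=v\,y))$ with $y=X(\sigma,\mathrm{fv}\,B-x)$. Unary substitution is $M[x:=N]=M\bullet(\iota,x:=N)$. $\alpha$-conversion $\sim_\alpha$ is the inductively defined relation with rules: $c\,k\sim_\alpha c\,k$; $v\,x\sim_\alpha v\,x$; $M\cdot N\sim_\alpha M'\cdot N'$ if $M\sim_\alpha M'$ and $N\sim_\alpha N'$; $\lambda[x:A]M\sim_\alpha\lambda[x':A']M'$ if $A\sim_\alpha A'$ and there is a variable $y$ with $y\notin\mathrm{fv}\,M-x$, $y\notin\mathrm{fv}\,M'-x'$ and $M[x:=v\,y]\equiv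 M'[x':=v\,y]$; and the same rule with $\Pi$ in place of $\lambda$. $\beta$-contraction is $(\lambda[x:A]M)\cdot N\ \triangleright_\beta\ M[x:=N]$. One-step $\beta$-reduction $\to_\beta$ is its contextual closure, inductively: $M\to_\beta N$ if $M\triangleright_\beta N$; $\lambda[x:A]M\to_\beta\lambda[x:A]M'$ and $\Pi[x:A]M\to_\beta\Pi[x:A]M'$ if $M\to_\beta M'$; $\lambda[x:A]M\to_\beta\lambda[x:A']M$ and $\Pi[x:A]M\to_\beta\Pi[x:A']M$ if $A\to_\beta A'$; $M\cdot P\to_\beta N\cdot P$ and $P\cdot M\to_\beta P\cdot N$ if $M\to_\beta N$. $\beta$-conversion $\simeq_\beta$ is the equivalence (reflexive–symmetric–transitive) closure of $\sim_\alpha\cup\to_\beta$. Pure Type System: fix a binary relation $\mathcal A\subseteq\mathcal C\times\mathcal C$ (axioms) and a ternary relation $\mathcal R\subseteq\mathcal C\times\mathcal C\times\mathcal C$ (rules). A context is a finite list of pairs $(x,A)$ with $x\in\mathcal V$, $A\in\Lambda$; $\Gamma,x:A$ denotes the list $(x,A)::\Gamma$; $\mathrm{dom}\,\Gamma$ is the list of first components; $(x,A)\in\Gamma$ is list membership. The judgments $\Gamma\ \mathrm{ok}$ and $\Gamma\vdash M:A$ are defined mutually inductively by: (nil) $[\,]\ \mathrm{ok}$; (cons) if $\Gamma\ \mathrm{ok}$, $\Gamma\vdash A:c\,s$ and $x\notin\mathrm{dom}\,\Gamma$ then $\Gamma,x:A\ \mathrm{ok}$; (sort) if $\Gamma\ \mathrm{ok}$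 and $\mathcal A\,s_1\,s_2$ then $\Gamma\vdash c\,s_1:c\,s_2$; (var) if $\Gamma\ \mathrm{ok}$ and $(x,A)\in\Gamma$ then $\Gamma\vdash v\,x:A$; (prod) if $\mathcal R\,s_1\,s_2\,s_3$, $\Gamma\vdash A:c\,s_1$ and for every $y\notin\mathrm{dom}\,\Gamma$, $\Gamma,y:A\vdash B[x:=v\,y]:c\,s_2$, then $\Gamma\vdash\Pi[x:A]B:c\,s_3$; (abs) if $\mathcal R\,s_1\,s_2\,s_3$, $\Gamma\vdash A:c\,s_1$, for every $z\notin\mathrm{dom}\,\Gamma$, $\Gamma,z:A\vdash B[y:=v\,z]:c\,s_2$, and for every $z\notin\mathrm{dom}\,\Gamma$, $\Gamma,z:A\vdash M[x:=v\,z]:B[y:=v\,z]$, then $\Gamma\vdash\lambda[x:A]M:\Pi[y:A]B$; (app) if $\Gamma\vdash M:\Pi[x:A]B$, $\Gamma\vdash N:A$ and $\Gamma\vdash B[x:=N]:c\,s$ for some $s$, then $\Gamma\vdash M\cdot N:B[x:=N]$; (conv) if $\Gamma\vdash M:A$, $A\simeq_\beta B$ and $\Gamma\vdash B:c\,s$ for some $s$, then $\Gamma\vdash M:B$. (The premises quantified over all fresh names in (prod) and (abs) are infinitely branching.) A substitution $\sigma$ is well-typed from $\Gamma$ to $\Delta$, written $\sigma:\Gamma\rightharpoonup\Delta$, if for every $(x,A)\in\Gamma$ we have $\Delta\vdash\sigma\,x:A\bullet\sigma$. *)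

(* raw first-order syntax of a Pure Type System with names. *)
From Stdlib Require Import List Relations.
Import ListNotations.
Set Implicit Arguments.

Record VarType := {
  vsort :> Type;
  v_eq_dec : forall x y : vsort, {x = y} + {x <> y};
  v_encode : vsort -> nat;
  v_decode : nat -> vsort;
  v_encode_decode : forall n, v_encode (v_decode n) = n
}.

Inductive term (V : VarType) (C : Type) : Type :=
| cst : C -> term V C
| var : V -> term V C
| lam : V -> term V C -> term V C -> term V C   (* lam x A M = λ[x:A]M *)
| pi  : V -> term V C -> term V C -> term V C   (* pi x A B = Π[x:A]B *)
| app : term V C -> term V C -> term V C.

Arguments cst {V C}.
Arguments var {V C}.
Arguments lam {V C}.
Arguments pi {V C}.
Arguments app {V C}.

Definition vremove {V : VarType} (xs : list V) (x : V) : list V :=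
  filter (fun y => if v_eq_dec V y x then false else true) xs.

Fixpoint fv {V : VarType} {C : Type} (M : term V C) : list V :=
  match M with
  | cst _ => []
  | var x => [x]
  | lam x A M => fv A ++ vremove (fv M) x
  | pi x A B => fv A ++ vremove (fv B) x
  | app M N => fv M ++ fv N
  end.

Definition subst_t (V : VarType) (C : Type) := V -> term V C.

Definition iota {V : VarType} {C : Type} : subst_t V C := var.

Definition upd {V : VarType} {C : Type} (sigma : subst_t V C) (x : V) (N : term V C)
  : subst_t V C :=
  fun y => if v_eq_dec V y x then N else sigma y.

Definition Xp {V : VarType} (chi : list nat -> nat) (xs : list V) : V :=
  v_decode V (chi (map (v_encode V) xs)).

Definition Xs {V : VarType} {C : Type} (chi : list nat -> nat)
  (sigma : subst_t V C) (xs : list V) : V :=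
  Xp chi (flat_map (fun y => fv (sigma y)) xs).

Fixpoint sapply {V : VarType} {C : Type} (chi : list nat -> nat)
  (M : term V C) (sigma : subst_t V C) : term V C :=
  match M with
  | cst k => cst k
  | var x => sigma x
  | app M N => app (sapply chi M sigma) (sapply chi N sigma)
  | lam x A M =>
      let y := Xs chi sigma (vremove (fv M) x) in
      lam y (sapply chi A sigma) (sapply chi M (upd sigma x (var y)))
  | pi x A B =>
      let y := Xs chi sigma (vremove (fv B) x) in
      pi y (sapply chi A sigma) (sapply chi B (upd sigma x (var y)))
  end.

Definition subst1 {V : VarType} {C : Type} (chi : list nat -> nat)
  (M : term V C) (x : V) (N : term V C) : term V C :=
  sapply chi M (upd iota x N).

Inductive alpha {V : VarType} {C : Type} (chi : list nat -> nat)
  : term V C -> term V C -> Prop :=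
| alpha_cst : forall k, alpha chi (cst k) (cst k)
| alpha_var : forall x, alpha chi (var x) (var x)
| alpha_app : forall M N M' N', alpha chi M M' -> alpha chi N N' ->
    alpha chi (app M N) (app M' N')
| alpha_lam : forall x A M x' A' M' y,
    alpha chi A A' ->
    ~ In y (vremove (fv M) x) -> ~ In y (vremove (fv M') x') ->
    subst1 chi M x (var y) = subst1 chi M' x' (var y) ->
    alpha chi (lam x A M) (lam x' A' M')
| alpha_pi : forall x A M x' A' M' y,
    alpha chi A A' ->
    ~ In y (vremove (fv M) x) -> ~ In y (vremove (fv M') x') ->
    subst1 chi M x (var y) = subst1 chi M' x' (var y) ->
    alpha chi (pi x A M) (pi x' A' M').

Inductive beta_contr {V : VarType} {C : Type} (chi : list nat -> nat)
  : term V C -> term V C -> Prop :=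
| beta_redex : forall x A M N,
    beta_contr chi (app (lam x A M) N) (subst1 chi M x N).

Inductive beta_step {V : VarType} {C : Type} (chi : list nat -> nat)
  : term V C -> term V C -> Prop :=
| bs_contr : forall M N, beta_contr chi M N -> beta_step chi M N
| bs_lam_body : forall x A M M', beta_step chi M M' ->
    beta_step chi (lam x A M) (lam x A M')
| bs_pi_body : forall x A M M', beta_step chi M M' ->
    beta_step chi (pi x A M) (pi x A M')
| bs_lam_dom : forall x A A' M, beta_step chi A A' ->
    beta_step chi (lam x A M) (lam x A' M)
| bs_pi_dom : forall x A A' M, beta_step chi A A' ->
    beta_step chi (pi x A M) (pi x A' M)
| bs_app_l : forall M N P, beta_step chi M N ->
    beta_step chi (app M P) (app N P)
| bs_app_r : forall M N P, beta_step chi M N ->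
    beta_step chi (app P M) (app P N).

Definition beta_conv {V : VarType} {C : Type} (chi : list nat -> nat)
  : term V C -> term V C -> Prop :=
  clos_refl_sym_trans (term V C)
    (fun M N => alpha chi M N \/ beta_step chi M N).

Definition context (V : VarType) (C : Type) := list (V * term V C).

Definition dom {V : VarType} {C : Type} (G : context V C) : list V := map fst G.

Inductive wf {V : VarType} {C : Type} (chi : list nat -> nat)
  (Ax : C -> C -> Prop) (Rl : C -> C -> C -> Prop) : context V C -> Prop :=
| wf_nil : wf chi Ax Rl []
| wf_cons : forall G x A s,
    wf chi Ax Rl G -> typing chi Ax Rl G A (cst s) -> ~ In x (dom G) ->
    wf chi Ax Rl ((x, A) :: G)
with typing {V : VarType} {C : Type} (chi : list nat -> nat)
  (Ax : C -> C -> Prop) (Rl : C -> C -> C -> Prop)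
  : context V C -> term V C -> term V C -> Prop :=
| ty_sort : forall G s1 s2,
    wf chi Ax Rl G -> Ax s1 s2 -> typing chi Ax Rl G (cst s1) (cst s2)
| ty_var : forall G x A,
    wf chi Ax Rl G -> In (x, A) G -> typing chi Ax Rl G (var x) A
| ty_prod : forall G x A B s1 s2 s3,
    Rl s1 s2 s3 ->
    typing chi Ax Rl G A (cst s1) ->
    (forall y, ~ In y (dom G) ->
       typing chi Ax Rl ((y, A) :: G) (subst1 chi B x (var y)) (cst s2)) ->
    typing chi Ax Rl G (pi x A B) (cst s3)
| ty_abs : forall G x y A B M s1 s2 s3,
    Rl s1 s2 s3 ->
    typing chi Ax Rl G A (cst s1) ->
    (forall z, ~ In z (dom G) ->
       typing chi Ax Rl ((z, A) :: G) (subst1 chi B y (var z)) (cst s2)) ->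
    (forall z, ~ In z (dom G) ->
       typing chi Ax Rl ((z, A) :: G) (subst1 chi M x (var z))
         (subst1 chi B y (var z))) ->
    typing chi Ax Rl G (lam x A M) (pi y A B)
| ty_app : forall G M N x A B s,
    typing chi Ax Rl G M (pi x A B) ->
    typing chi Ax Rl G N A ->
    typing chi Ax Rl G (subst1 chi B x N) (cst s) ->
    typing chi Ax Rl G (app M N) (subst1 chi B x N)
| ty_conv : forall G M A B s,
    typing chi Ax Rl G M A -> beta_conv chi A B ->
    typing chi Ax Rl G B (cst s) ->
    typing chi Ax Rl G M B.

Definition wt_subst {V : VarType} {C : Type} (chi : list nat -> nat)
  (Ax : C -> C -> Prop) (Rl : C -> C -> C -> Prop)
  (sigma : subst_t V C) (G D : context V C) : Prop :=
  forall x A, In (x, A) G -> typing chi Ax Rl D (sigma x) (sapply chi A sigma).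

From Pilot Require Import Defs.
From Stdlib Require Import List Relations.
Import ListNotations.

(* Induction on the typing derivation; the difficulty lies entirely in the bound
   names.  Terms are raw syntax and [M • s] renames every binder to a name chosen
   by [Xs], so equations between substituted terms hold only up to alpha.  They
   are handled through the canonical form [M • ι]: it is alpha-equivalent to [M],
   alpha-equivalent terms have equal images under every substitution, and typing
   is invariant under replacing the subject by a term with the same canonical
   form.  Substitutions compose, [(M • s) • t = M • (s; t)], which turns every
   renaming identity into an equation between canonical forms and shows that
   beta-conversion is stable under substitution.  In the binder cases the
   induction hypothesis is used at a name [w] fresh for [Γ], with the
   substitution [s, w := z] into the extended context [Δ, z : A • s]. *)

Section SubstitutionLemma.

Variables (V : VarType) (C : Type) (chi : list nat -> nat).
Hypothesis chi_fresh : forall ns, ~ In (chi ns) ns.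

Implicit Types (M N A B T P Q : term V C) (s t : subst_t V C) (l : list V).

Local Notation "M • s" := (sapply chi M s) (at level 40, left associativity).
Local Notation ι := (@iota V C).

Lemma vremove_In l x y : In y (vremove l x) <-> In y l /\ y <> x.
Proof. unfold vremove. rewrite filter_In. destruct (v_eq_dec V y x); intuition congruence. Qed.

Lemma vremove_app l1 l2 x : vremove (l1 ++ l2) x = vremove l1 x ++ vremove l2 x.
Proof. apply filter_app. Qed.

Lemma vremove_cons a l x :
  vremove (a :: l) x = if v_eq_dec V a x then vremove l x else a :: vremove l x.
Proof. unfold vremove; simpl. destruct (v_eq_dec V a x); reflexivity. Qed.

Lemma vremove_notin l x : ~ In x l -> vremove l x = l.
Proof.
  induction l as [|a l IH]; intros Hx; [reflexivity|].
  rewrite vremove_cons. destruct (v_eq_dec V a x) as [->|_].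
  - exfalso. apply Hx. left. reflexivity.
  - f_equal. apply IH. intro h. apply Hx. right. exact h.
Qed.

Lemma Xp_fresh l : ~ In (Xp chi l) l.
Proof.
  unfold Xp. intro H. apply (chi_fresh (map (v_encode V) l)).
  rewrite <- (v_encode_decode V (chi (map (v_encode V) l))). apply in_map, H.
Qed.

Lemma flat_map_ext_in {X Y} (f g : X -> list Y) (xs : list X) :
  (forall a, In a xs -> f a = g a) -> flat_map f xs = flat_map g xs.
Proof.
  induction xs as [|a xs IH]; intros H; [reflexivity|].
  cbn. rewrite H by (left; reflexivity). f_equal. apply IH. intros; apply H; right; auto.
Qed.

Lemma flat_map_flat_map {X Y Z} (f : X -> list Y) (g : Y -> list Z) (xs : list X) :
  flat_map g (flat_map f xs) = flat_map (fun a => flat_map g (f a)) xs.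
Proof. induction xs as [|a xs IH]; cbn; [reflexivity|]. rewrite flat_map_app, IH. reflexivity. Qed.

Lemma flat_map_singleton {X} (xs : list X) : flat_map (fun a => [a]) xs = xs.
Proof. induction xs as [|a xs IH]; cbn; [reflexivity|]. rewrite IH. reflexivity. Qed.

Lemma upd_eq s x N : upd s x N x = N.
Proof. unfold upd. destruct (v_eq_dec V x x); congruence. Qed.

Lemma upd_neq s x N y : y <> x -> upd s x N y = s y.
Proof. unfold upd. destruct (v_eq_dec V y x); congruence. Qed.

Definition fresh_for s l y := forall v, In v l -> ~ In y (fv (s v)).

Lemma Xs_fresh s l : fresh_for s l (Xs chi s l).
Proof. intros v Hv H. apply (Xp_fresh (flat_map (fun u => fv (s u)) l)), in_flat_map. eauto. Qed.

Lemma fresh_for_iota l y : ~ In y l -> fresh_for ι l y.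
Proof. intros Hy v Hv [->|[]]. contradiction. Qed.

Lemma fresh_for_incl s l1 l2 y : incl l1 l2 -> fresh_for s l2 y -> fresh_for s l1 y.
Proof. intros H1 H2 v Hv. apply H2, H1, Hv. Qed.

Lemma vremove_fv_upd s x y l :
  fresh_for s (vremove l x) y ->
  vremove (flat_map (fun v => fv (upd s x (var y) v)) l) y
  = flat_map (fun v => fv (s v)) (vremove l x).
Proof.
  induction l as [|a l IH]; intros Hfresh; [reflexivity|].
  cbn [flat_map]. rewrite vremove_app.
  rewrite (vremove_cons a l x) in Hfresh |- *.
  destruct (v_eq_dec V a x) as [->|Hax].
  - rewrite upd_eq. cbn [fv]. rewrite vremove_cons.
    destruct (v_eq_dec V y y) as [_|]; [|congruence]. apply IH, Hfresh.
  - rewrite upd_neq, vremove_notin by (auto; apply Hfresh; left; reflexivity).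
    cbn [flat_map]. f_equal. apply IH. intros v Hv. apply Hfresh. right. exact Hv.
Qed.

Lemma fv_sapply M s : fv (M • s) = flat_map (fun v => fv (s v)) (fv M).
Proof.
  revert s; induction M as [k|x|x A IHA M IHM|x A IHA M IHM|M IHM N IHN]; intros s; cbn.
  - reflexivity.
  - rewrite app_nil_r. reflexivity.
  - rewrite flat_map_app, IHA, IHM, vremove_fv_upd by apply Xs_fresh. reflexivity.
  - rewrite flat_map_app, IHA, IHM, vremove_fv_upd by apply Xs_fresh. reflexivity.
  - rewrite flat_map_app, IHM, IHN. reflexivity.
Qed.

Lemma sapply_agree M s t : (forall v, In v (fv M) -> s v = t v) -> M • s = M • t.
Proof.
  revert s t; induction M as [k|x|x A IHA M IHM|x A IHA M IHM|M IHM N IHN];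
    intros s t Hst; cbn [sapply fv] in *.
  { reflexivity. }
  { apply Hst. left. reflexivity. }
  3: { rewrite (IHM s t), (IHN s t) by (intros; apply Hst, in_or_app; auto). reflexivity. }
  all: assert (Hy : Xs chi s (vremove (fv M) x) = Xs chi t (vremove (fv M) x))
         by (unfold Xs; f_equal; apply flat_map_ext_in;
             intros v Hv; rewrite Hst by (apply in_or_app; auto); reflexivity);
       rewrite Hy, (IHA s t) by (intros; apply Hst, in_or_app; auto); f_equal;
       apply IHM; intros v Hv; unfold upd; destruct (v_eq_dec V v x); [reflexivity|];
       apply Hst, in_or_app; right; apply vremove_In; auto.
Qed.

Definition comp s t : subst_t V C := fun v => s v • t.

Lemma comp_upd s t x N v : comp (upd s x N) t v = upd (comp s t) x (N • t) v.
Proof. unfold comp, upd. destruct (v_eq_dec V v x); reflexivity. Qed.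

Lemma Xs_comp M s t x y :
  fresh_for s (vremove (fv M) x) y ->
  Xs chi t (vremove (fv (M • upd s x (var y))) y) = Xs chi (comp s t) (vremove (fv M) x).
Proof.
  intros Hy. unfold Xs. rewrite fv_sapply, vremove_fv_upd, flat_map_flat_map by exact Hy.
  f_equal. apply flat_map_ext_in. intros v _. unfold comp. rewrite fv_sapply. reflexivity.
Qed.

Lemma upd_comp_fresh M s t x y N :
  fresh_for s (vremove (fv M) x) y ->
  forall v, In v (fv M) -> comp (upd s x (var y)) (upd t y N) v = upd (comp s t) x N v.
Proof.
  intros Hy v Hv. unfold comp. destruct (v_eq_dec V v x) as [->|Hvx].
  - rewrite !upd_eq. cbn. apply upd_eq.
  - rewrite !upd_neq by exact Hvx. apply sapply_agree. intros u Hu. apply upd_neq.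
    intros ->. apply (Hy v); [apply vremove_In; auto|exact Hu].
Qed.

Lemma sapply_comp M s t : M • s • t = M • comp s t.
Proof.
  revert s t; induction M as [k|x|x A IHA M IHM|x A IHA M IHM|M IHM N IHN]; intros s t.
  1, 2: reflexivity.
  3: { cbn. rewrite IHM, IHN. reflexivity. }
  all: cbn [sapply]; rewrite IHA, Xs_comp by apply Xs_fresh; f_equal;
       rewrite IHM; apply sapply_agree, upd_comp_fresh, Xs_fresh.
Qed.

Lemma sapply_upd_fresh M s t x y N :
  fresh_for s (vremove (fv M) x) y ->
  M • upd s x (var y) • upd t y N = M • upd (comp s t) x N.
Proof. intros Hy. rewrite sapply_comp. apply sapply_agree, upd_comp_fresh, Hy. Qed.

Lemma subst1_sapply M x N t : subst1 chi M x N • t = M • upd t x (N • t).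
Proof. unfold subst1. rewrite sapply_comp. apply sapply_agree. intros v _. apply comp_upd. Qed.

Lemma subst1_rename M x y t N :
  ~ In y (vremove (fv M) x) -> subst1 chi M x (var y) • upd t y N = M • upd t x N.
Proof. intros Hy. apply (sapply_upd_fresh M ι t), fresh_for_iota, Hy. Qed.

Lemma fv_subst1_rename M x y :
  ~ In y (vremove (fv M) x) -> vremove (fv (subst1 chi M x (var y))) y = vremove (fv M) x.
Proof.
  intros Hy. unfold subst1. rewrite fv_sapply, vremove_fv_upd by (apply fresh_for_iota, Hy).
  apply flat_map_singleton.
Qed.

Lemma subst1_sapply_comm B N s t x y :
  fresh_for s (vremove (fv B) x) y ->
  subst1 chi (B • upd s x (var y)) y (N • s) • t = subst1 chi B x N • s • t.
Proof.
  intros Hy. rewrite subst1_sapply, sapply_upd_fresh by exact Hy.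
  rewrite !sapply_comp, subst1_sapply. reflexivity.
Qed.

Lemma lam_sapply_fresh A M s t x y :
  fresh_for s (vremove (fv M) x) y ->
  lam y (A • s) (M • upd s x (var y)) • t = lam x A M • comp s t.
Proof.
  intros Hy. cbn [sapply]. rewrite Xs_comp, sapply_comp, sapply_upd_fresh by exact Hy.
  reflexivity.
Qed.

Lemma pi_sapply_fresh A M s t x y :
  fresh_for s (vremove (fv M) x) y ->
  pi y (A • s) (M • upd s x (var y)) • t = pi x A M • comp s t.
Proof.
  intros Hy. cbn [sapply]. rewrite Xs_comp, sapply_comp, sapply_upd_fresh by exact Hy.
  reflexivity.
Qed.

(* The alpha-class representative whose binders carry the names chosen by [Xs]. *)
Local Notation canon M := (M • ι).

Lemma notin_vremove l x y : ~ In y l -> ~ In y (vremove l x).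
Proof. intros Hy H. apply Hy, (vremove_In l x y), H. Qed.

Lemma Xp_fresh_l l1 l2 : ~ In (Xp chi (l1 ++ l2)) l1.
Proof. intro H. apply (Xp_fresh (l1 ++ l2)), in_or_app. left. exact H. Qed.

Lemma Xp_fresh_r l1 l2 : ~ In (Xp chi (l1 ++ l2)) l2.
Proof. intro H. apply (Xp_fresh (l1 ++ l2)), in_or_app. right. exact H. Qed.

Lemma alpha_canon M : alpha chi (canon M) M.
Proof.
  induction M as [k|x|x A IHA M IHM|x A IHA M IHM|M IHM N IHN]; cbn [sapply].
  1, 2: constructor.
  3: { constructor; assumption. }
  all: set (y := Xs chi ι (vremove (fv M) x));
       set (w := Xp chi (fv (M • upd ι x (var y)) ++ fv M));
       (apply alpha_lam with (y := w) + apply alpha_pi with (y := w));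
       [exact IHA | apply notin_vremove, Xp_fresh_l | apply notin_vremove, Xp_fresh_r
       | apply (sapply_upd_fresh M ι ι), Xs_fresh].
Qed.

Lemma alpha_refl M : alpha chi M M.
Proof.
  induction M as [k|x|x A IHA M IHM|x A IHA M IHM|M IHM N IHN].
  1, 2: constructor.
  3: { constructor; assumption. }
  all: (apply alpha_lam with (y := Xp chi (fv M)) + apply alpha_pi with (y := Xp chi (fv M)));
       [exact IHA | apply notin_vremove, Xp_fresh .. | reflexivity].
Qed.

Lemma renamed_bodies_agree M M' x x' y :
  ~ In y (vremove (fv M) x) -> ~ In y (vremove (fv M') x') ->
  subst1 chi M x (var y) = subst1 chi M' x' (var y) ->
  vremove (fv M) x = vremove (fv M') x' /\ forall t N, M • upd t x N = M' • upd t x' N.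
Proof.
  intros Hy Hy' He. split.
  - rewrite <- (fv_subst1_rename M x y), <- (fv_subst1_rename M' x' y), He by assumption.
    reflexivity.
  - intros t N. rewrite <- (subst1_rename M x y), <- (subst1_rename M' x' y), He by assumption.
    reflexivity.
Qed.

Lemma alpha_sapply M N : alpha chi M N -> fv M = fv N /\ forall s, M • s = N • s.
Proof.
  induction 1 as [k|x|M N M' N' _ [IH1 IH1'] _ [IH2 IH2']
                  |x A M x' A' M' y _ [IHA IHA'] Hy Hy' He
                  |x A M x' A' M' y _ [IHA IHA'] Hy Hy' He].
  1, 2: split; reflexivity.
  { cbn. rewrite IH1, IH2. split; [reflexivity|]. intros s. rewrite IH1', IH2'. reflexivity. }
  all: destruct (renamed_bodies_agree M M' x x' y Hy Hy' He) as [Hfv Hbody];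
       cbn [fv sapply]; rewrite IHA, Hfv; split; [reflexivity|];
       intros s; rewrite IHA', Hbody; reflexivity.
Qed.

Lemma conv_of_canon_eq M N : canon M = canon N -> beta_conv chi M N.
Proof.
  intros H. apply rst_trans with (canon M).
  - apply rst_sym, rst_step. left. apply alpha_canon.
  - rewrite H. apply rst_step. left. apply alpha_canon.
Qed.

Lemma conv_congr (F : term V C -> term V C) P Q :
  (forall P Q, alpha chi P Q -> alpha chi (F P) (F Q)) ->
  (forall P Q, beta_step chi P Q -> beta_step chi (F P) (F Q)) ->
  beta_conv chi P Q -> beta_conv chi (F P) (F Q).
Proof.
  intros Halpha Hbeta H. induction H as [P Q [h|h]| | |].
  - apply rst_step. left. auto.
  - apply rst_step. right. auto.
  - apply rst_refl.
  - apply rst_sym. assumption.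
  - eapply rst_trans; eassumption.
Qed.

Lemma alpha_body_congr P Q x :
  alpha chi P Q ->
  exists w, ~ In w (vremove (fv P) x) /\ ~ In w (vremove (fv Q) x)
            /\ subst1 chi P x (var w) = subst1 chi Q x (var w).
Proof.
  intros H. exists (Xp chi (fv P ++ fv Q)).
  split; [|split]; [apply notin_vremove, Xp_fresh_l | apply notin_vremove, Xp_fresh_r |].
  apply (alpha_sapply P Q H).
Qed.

Lemma conv_lam x A A' M M' :
  beta_conv chi A A' -> beta_conv chi M M' -> beta_conv chi (lam x A M) (lam x A' M').
Proof.
  intros HA HM. apply rst_trans with (lam x A' M).
  - apply (conv_congr (fun P => lam x P M)); [|intros; apply bs_lam_dom; assumption|exact HA].
    intros P Q H. destruct (alpha_body_congr M M x (alpha_refl M)) as (w & H1 & H2 & H3).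
    eapply alpha_lam; eassumption.
  - apply (conv_congr (fun P => lam x A' P)); [|intros; apply bs_lam_body; assumption|exact HM].
    intros P Q H. destruct (alpha_body_congr P Q x H) as (w & H1 & H2 & H3).
    eapply alpha_lam; [apply alpha_refl|eassumption..].
Qed.

Lemma conv_pi x A A' M M' :
  beta_conv chi A A' -> beta_conv chi M M' -> beta_conv chi (pi x A M) (pi x A' M').
Proof.
  intros HA HM. apply rst_trans with (pi x A' M).
  - apply (conv_congr (fun P => pi x P M)); [|intros; apply bs_pi_dom; assumption|exact HA].
    intros P Q H. destruct (alpha_body_congr M M x (alpha_refl M)) as (w & H1 & H2 & H3).
    eapply alpha_pi; eassumption.
  - apply (conv_congr (fun P => pi x A' P)); [|intros; apply bs_pi_body; assumption|exact HM].
    intros P Q H. destruct (alpha_body_congr P Q x H) as (w & H1 & H2 & H3).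
    eapply alpha_pi; [apply alpha_refl|eassumption..].
Qed.

Lemma conv_app M M' N N' :
  beta_conv chi M M' -> beta_conv chi N N' -> beta_conv chi (Defs.app M N) (Defs.app M' N').
Proof.
  intros HM HN. apply rst_trans with (Defs.app M' N).
  - apply (conv_congr (fun P => Defs.app P N)); [|intros; apply bs_app_l; assumption|exact HM].
    intros P Q H. constructor; [exact H|apply alpha_refl].
  - apply (conv_congr (fun P => Defs.app M' P)); [|intros; apply bs_app_r; assumption|exact HN].
    intros P Q H. constructor; [apply alpha_refl|exact H].
Qed.

Lemma vremove_incl l1 l2 x : incl l1 l2 -> incl (vremove l1 x) (vremove l2 x).
Proof. intros H v. rewrite !vremove_In. intros [Hv Hvx]. auto. Qed.

Lemma fv_beta_step M N : beta_step chi M N -> incl (fv N) (fv M).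
Proof.
  induction 1 as [? ? [x A M N]| | | | | |]; cbn [fv].
  { unfold subst1. rewrite fv_sapply. intros u Hu.
    apply in_flat_map in Hu as [v [Hv Hu]]. apply in_or_app.
    destruct (v_eq_dec V v x) as [->|Hvx].
    - rewrite upd_eq in Hu. right. exact Hu.
    - rewrite upd_neq in Hu by exact Hvx. destruct Hu as [<-|[]].
      left. apply in_or_app. right. apply vremove_In. auto. }
  1, 2: apply incl_app; [apply incl_appl, incl_refl|apply incl_appr, vremove_incl; assumption].
  all: apply incl_app; [apply incl_appl|apply incl_appr]; auto using incl_refl.
Qed.

Lemma Xs_fresh_beta_step s M M' x :
  beta_step chi M M' -> fresh_for s (vremove (fv M') x) (Xs chi s (vremove (fv M) x)).
Proof. intros H. eapply fresh_for_incl; [apply vremove_incl, fv_beta_step, H|apply Xs_fresh]. Qed.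

Lemma conv_sapply_beta_step M N s : beta_step chi M N -> beta_conv chi (M • s) (N • s).
Proof.
  intros H; revert s.
  induction H as [? ? [x A M N]|x A M M' H IH|x A M M' H IH|x A A' M H IH|x A A' M H IH
                 |M N P H IH|M N P H IH]; intros s.
  - set (y := Xs chi s (vremove (fv M) x)).
    apply rst_trans with (subst1 chi (M • upd s x (var y)) y (N • s)).
    + apply rst_step. right. apply bs_contr, beta_redex.
    + apply conv_of_canon_eq, subst1_sapply_comm, Xs_fresh.
  - apply rst_trans with (lam (Xs chi s (vremove (fv M) x)) (A • s)
                              (M' • upd s x (var (Xs chi s (vremove (fv M) x))))).
    + apply conv_lam; [apply rst_refl|apply IH].
    + apply conv_of_canon_eq.
      rewrite lam_sapply_fresh, sapply_comp by apply Xs_fresh_beta_step, H. reflexivity.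
  - apply rst_trans with (pi (Xs chi s (vremove (fv M) x)) (A • s)
                             (M' • upd s x (var (Xs chi s (vremove (fv M) x))))).
    + apply conv_pi; [apply rst_refl|apply IH].
    + apply conv_of_canon_eq.
      rewrite pi_sapply_fresh, sapply_comp by apply Xs_fresh_beta_step, H. reflexivity.
  - apply conv_lam; [apply IH|apply rst_refl].
  - apply conv_pi; [apply IH|apply rst_refl].
  - apply conv_app; [apply IH|apply rst_refl].
  - apply conv_app; [apply rst_refl|apply IH].
Qed.

Lemma conv_sapply M N s : beta_conv chi M N -> beta_conv chi (M • s) (N • s).
Proof.
  induction 1 as [P Q [h|h]| | |].
  - rewrite (proj2 (alpha_sapply P Q h) s). apply rst_refl.
  - apply conv_sapply_beta_step, h.
  - apply rst_refl.
  - apply rst_sym. assumption.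
  - eapply rst_trans; eassumption.
Qed.

Variables (Ax : C -> C -> Prop) (Rl : C -> C -> C -> Prop).

Local Notation ty := (typing chi Ax Rl).
Local Notation wfc := (wf chi Ax Rl).

Lemma typing_wf G M A : ty G M A -> wfc G.
Proof. induction 1; assumption. Qed.

Lemma incl_cons_cons {X} (a : X) (xs ys : list X) : incl xs ys -> incl (a :: xs) (a :: ys).
Proof. intros H. apply incl_cons; [left; reflexivity|apply incl_tl, H]. Qed.

Lemma typing_weaken G M A : ty G M A -> forall G', incl G G' -> wfc G' -> ty G' M A.
Proof.
  induction 1 as [G k1 k2 HG Hax|G x A HG Hin|G x A B k1 k2 k3 HR HA IHA HB IHB
                 |G x y A B M k1 k2 k3 HR HA IHA HB IHB HM IHM|G M N x A B k HM IHM HN IHN HB IHB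
                 |G M A B k HM IHM Hc HB IHB]; intros G' Hincl HG'.
  - constructor; assumption.
  - constructor; auto.
  - apply ty_prod with k1 k2; auto. intros z Hz.
    assert (Hz' : ~ In z (dom G)) by (intro h; apply Hz, (incl_map fst Hincl), h).
    apply IHB; [exact Hz'|apply incl_cons_cons, Hincl|econstructor; eauto].
  - assert (Hz' : forall z, ~ In z (dom G') -> ~ In z (dom G))
      by (intros z Hz h; apply Hz, (incl_map fst Hincl), h).
    apply ty_abs with k1 k2 k3; auto; intros z Hz;
      [apply IHB|apply IHM]; auto using incl_cons_cons; econstructor; eauto.
  - eapply ty_app; eauto.
  - eapply ty_conv; eauto.
Qed.

Lemma typing_weaken_cons G M A z B : ty G M A -> wfc ((z, B) :: G) -> ty ((z, B) :: G) M A.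
Proof. intros H HG. apply (typing_weaken _ _ _ H); [apply incl_tl, incl_refl|exact HG]. Qed.

Lemma typing_vars_cons G G' z A :
  (forall v T, In (v, T) G -> ty G' (var v) T) -> wfc ((z, A) :: G') ->
  forall v T, In (v, T) ((z, A) :: G) -> ty ((z, A) :: G') (var v) T.
Proof.
  intros HG HG' v T [[= -> ->]|Hin].
  - constructor; [exact HG'|left; reflexivity].
  - apply typing_weaken_cons; [apply HG, Hin|exact HG'].
Qed.

Lemma typing_ctx_replace G M A :
  ty G M A -> forall G', (forall v T, In (v, T) G -> ty G' (var v) T) ->
  incl (dom G) (dom G') -> wfc G' -> ty G' M A.
Proof.
  induction 1 as [G k1 k2 HG Hax|G x A HG Hin|G x A B k1 k2 k3 HR HA IHA HB IHB
                 |G x y A B M k1 k2 k3 HR HA IHA HB IHB HM IHM|G M N x A B k HM IHM HN IHN HB IHB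
                 |G M A B k HM IHM Hc HB IHB]; intros G' Hvars Hdom HG'.
  - constructor; assumption.
  - apply Hvars, Hin.
  - apply ty_prod with k1 k2; auto. intros z Hz.
    assert (Hz' : wfc ((z, A) :: G')) by (econstructor; eauto).
    apply IHB; [intro h; apply Hz, Hdom, h|apply typing_vars_cons; assumption
               |apply incl_cons_cons, Hdom|exact Hz'].
  - assert (Hext : forall z, ~ In z (dom G') -> wfc ((z, A) :: G'))
      by (intros; econstructor; eauto).
    apply ty_abs with k1 k2 k3; auto; intros z Hz.
    + apply IHB; [intro h; apply Hz, Hdom, h|apply typing_vars_cons; auto
                 |apply incl_cons_cons, Hdom|auto].
    + apply IHM; [intro h; apply Hz, Hdom, h|apply typing_vars_cons; auto
                 |apply incl_cons_cons, Hdom|auto].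
  - eapply ty_app; eauto.
  - eapply ty_conv; eauto.
Qed.

Lemma typing_ctx_conv G z A A' k k' M T :
  ty G A (cst k) -> ty G A' (cst k') -> beta_conv chi A' A -> ~ In z (dom G) ->
  ty ((z, A) :: G) M T -> ty ((z, A') :: G) M T.
Proof.
  intros HA HA' Hconv Hz H.
  assert (HG' : wfc ((z, A') :: G)) by (econstructor; eauto using typing_wf).
  apply (typing_ctx_replace _ _ _ H); [|apply incl_refl|exact HG'].
  intros v U [[= -> ->]|Hin].
  - apply ty_conv with A' k; [constructor; [exact HG'|left; reflexivity]|exact Hconv|].
    apply typing_weaken_cons; assumption.
  - constructor; [exact HG'|right; exact Hin].
Qed.

Lemma Xs_iota_fresh l : ~ In (Xs chi ι l) l.
Proof. intros H. apply (Xs_fresh ι l _ H). left. reflexivity. Qed.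

Lemma typing_canon G M A : ty G M A -> forall N, canon M = canon N -> ty G N A.
Proof.
  induction 1 as [G k1 k2 HG Hax|G x A HG Hin|G x A B k1 k2 k3 HR HA IHA HB IHB
                 |G x y A B M k1 k2 k3 HR HA IHA HB IHB HM IHM|G M N x A B k HM IHM HN IHN HB IHB
                 |G M A B k HM IHM Hc HB IHB]; intros N0 HN0.
  - destruct N0; try discriminate. injection HN0 as ->. constructor; assumption.
  - destruct N0; try discriminate. injection HN0 as ->. constructor; assumption.
  - destruct N0 as [| |x' A' B'|x' A' B'|]; try discriminate.
    injection HN0 as Hy HA' HB'. rewrite <- Hy in HB'.
    assert (HtA' : ty G A' (cst k1)) by (apply IHA, HA').
    assert (Hbody : forall z, subst1 chi B x (var z) = subst1 chi B' x' (var z)).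
    { intros z. apply (renamed_bodies_agree B B' x x' (Xs chi ι (vremove (fv B) x)));
        [apply Xs_iota_fresh|rewrite Hy; apply Xs_iota_fresh|exact HB']. }
    apply ty_prod with k1 k2; [assumption..|]. intros z Hz. rewrite <- Hbody.
    apply typing_ctx_conv with A k1 k1; auto. apply conv_of_canon_eq. symmetry. exact HA'.
  - destruct N0 as [| |x' A' M'|x' A' M'|]; try discriminate.
    injection HN0 as Hy HA' HM'. rewrite <- Hy in HM'.
    assert (HtA' : ty G A' (cst k1)) by (apply IHA, HA').
    assert (Hconv : beta_conv chi A' A) by (apply conv_of_canon_eq; symmetry; exact HA').
    assert (Hbody : forall z, subst1 chi M x (var z) = subst1 chi M' x' (var z)).
    { intros z. apply (renamed_bodies_agree M M' x x' (Xs chi ι (vremove (fv M) x)));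
        [apply Xs_iota_fresh|rewrite Hy; apply Xs_iota_fresh|exact HM']. }
    apply ty_conv with (pi y A' B) k3.
    + apply ty_abs with k1 k2 k3; [assumption..| |]; intros z Hz.
      * apply typing_ctx_conv with A k1 k1; auto.
      * rewrite <- Hbody. apply typing_ctx_conv with A k1 k1; auto.
    + apply conv_pi; [exact Hconv|apply rst_refl].
    + apply ty_prod with k1 k2; assumption.
  - destruct N0 as [| | | |M' N']; try discriminate.
    injection HN0 as HM' HN'.
    apply ty_conv with (subst1 chi B x N') k.
    + eapply ty_app; [apply IHM, HM'|apply IHN, HN'|].
      eapply IHB. rewrite !subst1_sapply, HN'. reflexivity.
    + apply conv_of_canon_eq. rewrite !subst1_sapply, HN'. reflexivity.
    + exact HB.
  - eapply ty_conv; eauto.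
Qed.

Lemma wt_subst_cons s G D A w z :
  wt_subst chi Ax Rl s G D -> wfc ((z, A • s) :: D) ->
  ~ In w (dom G) -> ~ In w (fv A) -> (forall v T, In (v, T) G -> ~ In w (fv T)) ->
  wt_subst chi Ax Rl (upd s w (var z)) ((w, A) :: G) ((z, A • s) :: D).
Proof.
  intros Hs HD' Hw_dom HwA Hw_ctx v T [[= <- <-]|Hin].
  - rewrite upd_eq, (sapply_agree A (upd s w (var z)) s)
      by (intros u Hu; apply upd_neq; intros ->; contradiction).
    constructor; [exact HD'|left; reflexivity].
  - assert (Hvw : v <> w) by (intros ->; apply Hw_dom, (in_map fst _ _ Hin)).
    rewrite upd_neq, (sapply_agree T (upd s w (var z)) s)
      by (auto; intros u Hu; apply upd_neq; intros ->; apply (Hw_ctx v T Hin Hu)).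
    apply typing_weaken_cons; [apply Hs, Hin|exact HD'].
Qed.

Lemma fresh_exists G l :
  exists w, ~ In w (dom G) /\ ~ In w l /\ forall v T, In (v, T) G -> ~ In w (fv T).
Proof.
  set (avoid := dom G ++ l ++ flat_map (fun p => fv (snd p)) G).
  exists (Xp chi avoid). pose proof (Xp_fresh avoid) as Hw.
  unfold avoid at 2 in Hw. rewrite !in_app_iff, in_flat_map in Hw.
  split; [|split]; [tauto|tauto|]. intros v T Hin h. apply Hw. right. right.
  exists (v, T). auto.
Qed.

(* The body of the binder [x] in [(_ x B) • s], instantiated with [z]. *)
Local Notation open_sapply B x s z :=
  (subst1 chi (B • upd s x (var (Xs chi s (vremove (fv B) x)))) (Xs chi s (vremove (fv B) x))
          (var z)).

Lemma canon_open_sapply B s x w z :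
  ~ In w (vremove (fv B) x) ->
  canon (subst1 chi B x (var w) • upd s w (var z)) = canon (open_sapply B x s z).
Proof.
  intros Hw. rewrite subst1_rename, subst1_sapply, sapply_upd_fresh, sapply_comp
    by (assumption || apply Xs_fresh).
  apply sapply_agree. intros v _. apply comp_upd.
Qed.

Lemma typing_open_sapply G A B T x w s D z :
  (forall s' D', wt_subst chi Ax Rl s' ((w, A) :: G) D' -> wfc D' ->
     ty D' (subst1 chi B x (var w) • s') (T • s')) ->
  wt_subst chi Ax Rl s G D -> wfc ((z, A • s) :: D) ->
  ~ In w (dom G) -> ~ In w (fv A) -> ~ In w (vremove (fv B) x) ->
  (forall v U, In (v, U) G -> ~ In w (fv U)) ->
  ty ((z, A • s) :: D) (open_sapply B x s z) (T • upd s w (var z)).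
Proof.
  intros IH Hs HD' Hw_dom HwA HwB Hw_ctx.
  apply (typing_canon _ _ _ (IH _ _ (wt_subst_cons _ _ _ _ _ _ Hs HD' Hw_dom HwA Hw_ctx) HD')).
  apply canon_open_sapply, HwB.
Qed.

Lemma typing_sapply G M A :
  ty G M A -> forall s D, wt_subst chi Ax Rl s G D -> wfc D -> ty D (M • s) (A • s).
Proof.
  induction 1 as [G k1 k2 HG Hax|G x A HG Hin|G x A B k1 k2 k3 HR HA IHA HB IHB
                 |G x y A B M k1 k2 k3 HR HA IHA HB IHB HM IHM|G M N x A B k HM IHM HN IHN HB IHB
                 |G M A B k HM IHM Hc HB IHB]; intros s D Hs HD.
  - constructor; assumption.
  - apply Hs, Hin.
  - assert (HAs := IHA s D Hs HD). cbn [sapply] in HAs |- *.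
    destruct (fresh_exists G (fv A ++ vremove (fv B) x)) as (w & Hw_dom & Hw & Hw_ctx).
    rewrite in_app_iff in Hw.
    apply ty_prod with k1 k2; [assumption..|]. intros z Hz.
    apply (typing_open_sapply G A B (cst k2) x w s D z (IHB w Hw_dom));
      [assumption|econstructor; eassumption|assumption|tauto|tauto|assumption].
  - assert (HAs := IHA s D Hs HD). cbn [sapply] in HAs |- *.
    destruct (fresh_exists G (fv A ++ vremove (fv B) y ++ vremove (fv M) x))
      as (w & Hw_dom & Hw & Hw_ctx).
    rewrite !in_app_iff in Hw.
    assert (HBs : forall z, ~ In z (dom D) ->
                  ty ((z, A • s) :: D) (open_sapply B y s z) (cst k2)).
    { intros z Hz.
      apply (typing_open_sapply G A B (cst k2) y w s D z (IHB w Hw_dom));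
        [assumption|econstructor; eassumption|assumption|tauto|tauto|assumption]. }
    apply ty_abs with k1 k2 k3; [assumption..| |]; intros z Hz; [apply HBs, Hz|].
    apply ty_conv with (subst1 chi B y (var w) • upd s w (var z)) k2;
      [|apply conv_of_canon_eq, canon_open_sapply; tauto|apply HBs, Hz].
    apply (typing_open_sapply G A M _ x w s D z (IHM w Hw_dom));
      [assumption|econstructor; eassumption|assumption|tauto|tauto|assumption].
  - assert (HMs := IHM s D Hs HD). cbn [sapply] in HMs |- *.
    set (y := Xs chi s (vremove (fv B) x)).
    assert (Hcanon : canon (subst1 chi (B • upd s x (var y)) y (N • s))
                     = canon (subst1 chi B x N • s))
      by apply subst1_sapply_comm, Xs_fresh.
    apply ty_conv with (subst1 chi (B • upd s x (var y)) y (N • s)) k.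
    + eapply ty_app; [exact HMs|apply IHN; assumption|].
      apply (typing_canon _ _ _ (IHB s D Hs HD)). symmetry. exact Hcanon.
    + apply conv_of_canon_eq, Hcanon.
    + apply IHB; assumption.
  - apply ty_conv with (A • s) k; [apply IHM|apply conv_sapply|apply IHB]; assumption.
Qed.

End SubstitutionLemma.

Theorem mainTheorem16 (V : VarType) (C : Type) (chi : list nat -> nat)
  (Hchi : forall ns, ~ In (chi ns) ns)
  (Ax : C -> C -> Prop) (Rl : C -> C -> C -> Prop)
  (Gamma Delta : context V C) (M A : term V C) (sigma : subst_t V C) :
  wt_subst chi Ax Rl sigma Gamma Delta ->
  wf chi Ax Rl Delta ->
  typing chi Ax Rl Gamma M A ->
  typing chi Ax Rl Delta (sapply chi M sigma) (sapply chi A sigma).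
Proof.
  intros Hsigma HDelta HM.
  exact (typing_sapply V C chi Hchi Ax Rl _ _ _ HM sigma Delta Hsigma HDelta).
Qed.
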